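(* Let $Id_{Gr}\colon Gr\to Gr$ be the identity functor of the category of groups. There is a natural isomorphism of functors $Gr\to Gr$ $$\Gamma_1\colon G^{ab}\xrightarrow{\simeq}T_1(Id_{Gr})(G)$$ such that $\Gamma_1(\bar g)=t_1(g)$ for $g\in G$.
   Context: Notation. - $G^{ab}=G/[G,G]$, with $\bar g$ the class of $g$. - For a reduced functor $F\colon Gr\to Gr$: $cr_2F(G,G)=\ker(F(G*G)\to F(G)\times F(G))$, induced by the two retractions of the free product $G*G$. - $T_1F(G)$ is the quotient of $F(G)$ by the image of $cr_2F(G,G)\subseteq F(G*G)$ under $F(\nabla)$ (a normal subgroup), where $\nabla\colon G*G\to G$ is the folding map; $t_1$ is the projection. *)

(* abstract (possibly infinite) groups via mathcomp's
   [groupType] from boot/monoid.v (NOT the finite groups of fingroup). *)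
From HB Require Import structures.
From mathcomp Require Import all_boot.

Set Implicit Arguments.
Unset Strict Implicit.
Unset Printing Implicit Defensive.


Local Open Scope group_scope.

Definition is_hom (G H : groupType) (f : G -> H) : Prop :=
  forall x y : G, f (x * y) = f x * f y.

Definition is_subgroup (G : groupType) (S : G -> Prop) : Prop :=
  S 1 /\ (forall x y, S x -> S y -> S (x * y)) /\ (forall x, S x -> S x^-1).

Definition gen_subgroup (G : groupType) (S : G -> Prop) : G -> Prop :=
  fun x => forall T : G -> Prop, is_subgroup T -> (forall y, S y -> T y) -> T x.

Definition commutator_subgroup (G : groupType) : G -> Prop :=
  gen_subgroup (fun c : G => exists x y : G, c = commg x y).

Definition is_free_product (G1 G2 P : groupType) (i1 : G1 -> P) (i2 : G2 -> P)
  : Prop :=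
  is_hom i1 /\ is_hom i2 /\
  forall (K : groupType) (f1 : G1 -> K) (f2 : G2 -> K),
    is_hom f1 -> is_hom f2 ->
    exists f : P -> K,
      (is_hom f /\ (forall x, f (i1 x) = f1 x) /\ (forall x, f (i2 x) = f2 x)) /\
      (forall f' : P -> K, is_hom f' ->
         (forall x, f' (i1 x) = f1 x) -> (forall x, f' (i2 x) = f2 x) ->
         forall p, f' p = f p).

Definition GG_data (G P : groupType) (i1 i2 : G -> P) (r1 r2 nabla : P -> G)
  : Prop :=
  is_free_product i1 i2 /\
  is_hom r1 /\ (forall x, r1 (i1 x) = x) /\ (forall x, r1 (i2 x) = 1) /\
  is_hom r2 /\ (forall x, r2 (i1 x) = 1) /\ (forall x, r2 (i2 x) = x) /\
  is_hom nabla /\ (forall x, nabla (i1 x) = x) /\ (forall x, nabla (i2 x) = x).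

(* cr_2 Id (G,G) = ker (G*G -> G x G) *)
Definition cr2_Id (G P : groupType) (r1 r2 : P -> G) : P -> Prop :=
  fun p => r1 p = 1 /\ r2 p = 1.

(* image of cr_2 Id(G,G) under Id(nabla) = nabla : the subgroup killed by t_1 *)
Definition T1_kernel (G P : groupType) (r1 r2 nabla : P -> G) : G -> Prop :=
  fun g => exists p, cr2_Id r1 r2 p /\ nabla p = g.

Definition is_quotient (G Q : groupType) (N : G -> Prop) (q : G -> Q) : Prop :=
  is_hom q /\ (forall y : Q, exists x : G, q x = y) /\
  (forall x : G, q x = 1 <-> N x).

Definition is_abelianization (G A : groupType) (ab : G -> A) : Prop :=
  is_quotient (@commutator_subgroup G) ab.

Definition is_T1Id (G P : groupType) (r1 r2 nabla : P -> G)
  (T : groupType) (t1 : G -> T) : Prop :=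
  is_quotient (T1_kernel r1 r2 nabla) t1.

Definition Gamma1_spec (G A T : groupType) (ab : G -> A) (t1 : G -> T)
  (Gamma : A -> T) : Prop :=
  is_hom Gamma /\ forall g : G, Gamma (ab g) = t1 g.

(* T_1(Id)(G) is G modulo nabla(ker (G*G -> G x G)), so it suffices to show that
   this subgroup is [G,G].  The commutator [x,y] is nabla [i1 x, i2 y], and
   [i1 x, i2 y] is killed by both retractions.  Conversely, for a homomorphism
   phi into an abelian group, phi o nabla and (phi o r1)(phi o r2) agree on both
   injections of G*G, hence everywhere; so phi (nabla p) = 1 whenever
   r1 p = r2 p = 1.  Applied to the abelianization, nabla p lies in [G,G]. *)
From HB Require Import structures.
From mathcomp Require Import all_boot.

Set Implicit Arguments.
Unset Strict Implicit.
Unset Printing Implicit Defensive.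

Local Open Scope group_scope.

Section Homomorphism.

Variables (G H : groupType) (f : G -> H).
Hypothesis hom_f : is_hom f.

Lemma hom1 : f 1 = 1.
Proof. by apply: (@mulgI _ (f 1)); rewrite -hom_f !mulg1. Qed.

Lemma homV x : f x^-1 = (f x)^-1.
Proof. by symmetry; apply: mulg1_eq; rewrite -hom_f mulgV hom1. Qed.

Lemma homR x y : f [~ x, y] = [~ f x, f y].
Proof. by rewrite /commg /conjg !hom_f !homV. Qed.

End Homomorphism.

Lemma abelianization_comm (G A : groupType) (ab : G -> A) :
  is_abelianization ab -> forall a b : A, a * b = b * a.
Proof.
move=> [hom_ab [surj_ab ker_ab]] a b.
have [x <-] := surj_ab a; have [y <-] := surj_ab b.
have ab_commg : ab [~ x, y] = 1.
  by apply/ker_ab => S _ sub_S; apply: sub_S; exists x, y.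
by rewrite -!hom_ab (commgC x y) hom_ab ab_commg mulg1.
Qed.

Lemma iso_of_same_kernel (G A T : groupType) (q1 : G -> A) (q2 : G -> T) :
  is_hom q1 -> (forall a, exists x, q1 x = a) ->
  is_hom q2 -> (forall t, exists x, q2 x = t) ->
  (forall x, q1 x = 1 <-> q2 x = 1) ->
  exists Gamma : A -> T,
    (is_hom Gamma /\ forall g, Gamma (q1 g) = q2 g) /\ bijective Gamma.
Proof.
move=> hom_q1 surj_q1 hom_q2 surj_q2 same_ker.
have fiber12 x y : q1 x = q1 y -> q2 x = q2 y.
  move=> e; apply: divg1_eq; rewrite -homV // -hom_q2; apply/same_ker.
  by rewrite hom_q1 homV // e mulgV.
have fiber21 x y : q2 x = q2 y -> q1 x = q1 y.
  move=> e; apply: divg1_eq; rewrite -homV // -hom_q1; apply/same_ker.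
  by rewrite hom_q2 homV // e mulgV.
have preim1 a : exists x, q1 x == a by have [x /eqP] := surj_q1 a; exists x.
have preim2 t : exists x, q2 x == t by have [x /eqP] := surj_q2 t; exists x.
pose Gamma a := q2 (xchoose (preim1 a)).
pose Delta t := q1 (xchoose (preim2 t)).
have GammaE g : Gamma (q1 g) = q2 g by apply/fiber12/eqP/(xchooseP (preim1 _)).
have DeltaE g : Delta (q2 g) = q1 g by apply/fiber21/eqP/(xchooseP (preim2 _)).
exists Gamma; split; first split => //.
- move=> a b; have [x <-] := surj_q1 a; have [y <-] := surj_q1 b.
  by rewrite -hom_q1 !GammaE hom_q2.
- exists Delta.
  + by move=> a; have [x <-] := surj_q1 a; rewrite GammaE DeltaE.
  + by move=> t; have [x <-] := surj_q2 t; rewrite DeltaE GammaE.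
Qed.

Section FoldingMap.

Variables (G P : groupType) (i1 i2 : G -> P) (r1 r2 nabla : P -> G).
Hypothesis free_P : is_free_product i1 i2.
Hypotheses (hom_r1 : is_hom r1) (hom_r2 : is_hom r2) (hom_nabla : is_hom nabla).
Hypotheses (r1_i1 : forall x, r1 (i1 x) = x) (r1_i2 : forall x, r1 (i2 x) = 1).
Hypotheses (r2_i1 : forall x, r2 (i1 x) = 1) (r2_i2 : forall x, r2 (i2 x) = x).
Hypotheses (nabla_i1 : forall x, nabla (i1 x) = x)
           (nabla_i2 : forall x, nabla (i2 x) = x).

Lemma is_subgroup_T1_kernel : is_subgroup (T1_kernel r1 r2 nabla).
Proof.
split; [|split].
- by exists 1; rewrite /cr2_Id !hom1.
- move=> _ _ [p [[p1 p2] <-]] [q [[q1 q2] <-]]; exists (p * q).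
  by rewrite /cr2_Id hom_r1 hom_r2 hom_nabla p1 p2 q1 q2 !mulg1.
- move=> _ [p [[p1 p2] <-]]; exists p^-1.
  by rewrite /cr2_Id !homV // p1 p2 invg1.
Qed.

Lemma commutator_subgroup_sub_T1_kernel g :
  commutator_subgroup g -> T1_kernel r1 r2 nabla g.
Proof.
apply; first exact: is_subgroup_T1_kernel.
move=> _ [x [y ->]]; exists [~ i1 x, i2 y].
by rewrite /cr2_Id !homR // r1_i1 r1_i2 r2_i1 r2_i2 nabla_i1 nabla_i2 commg1 comm1g.
Qed.

Lemma abelian_hom_nabla (A : groupType) (phi : G -> A) :
  is_hom phi -> (forall a b : A, a * b = b * a) ->
  forall p, phi (nabla p) = phi (r1 p) * phi (r2 p).
Proof.
move=> hom_phi commA p.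
pose psi q := phi (r1 q) * phi (r2 q).
have hom_psi : is_hom psi.
  move=> x y; rewrite /psi hom_r1 hom_r2 !hom_phi -!mulgA; congr (_ * _).
  by rewrite !mulgA (commA (phi (r1 y))).
have hom_phi_nabla : is_hom (phi \o nabla) by move=> x y; rewrite /= hom_nabla.
have [_ [_ unique_ext]] := free_P.
have [h [_ h_unique]] := unique_ext A phi phi hom_phi hom_phi.
have psi_i1 x : psi (i1 x) = phi x by rewrite /psi r1_i1 r2_i1 hom1 ?mulg1.
have psi_i2 x : psi (i2 x) = phi x by rewrite /psi r1_i2 r2_i2 hom1 ?mul1g.
have phi_nabla_i1 x : (phi \o nabla) (i1 x) = phi x by rewrite /= nabla_i1.
have phi_nabla_i2 x : (phi \o nabla) (i2 x) = phi x by rewrite /= nabla_i2.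
by rewrite -/(psi p) (h_unique _ hom_psi psi_i1 psi_i2)
  -(h_unique _ hom_phi_nabla phi_nabla_i1 phi_nabla_i2).
Qed.

Lemma T1_kernel_sub_commutator_subgroup (A : groupType) (ab : G -> A) :
  is_abelianization ab ->
  forall g, T1_kernel r1 r2 nabla g -> commutator_subgroup g.
Proof.
move=> ab_G _ [p [[p1 p2] <-]]; have [hom_ab [_ ker_ab]] := ab_G.
apply/ker_ab; rewrite (abelian_hom_nabla hom_ab (abelianization_comm ab_G)).
by rewrite p1 p2 hom1 ?mulg1.
Qed.

End FoldingMap.

Lemma T1_kernel_commutator_subgroup (G P : groupType) (i1 i2 : G -> P)
    (r1 r2 nabla : P -> G) (A : groupType) (ab : G -> A) :
  GG_data i1 i2 r1 r2 nabla -> is_abelianization ab ->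
  forall g, T1_kernel r1 r2 nabla g <-> commutator_subgroup g.
Proof.
move=> [free_P [hom_r1 [r1_i1 [r1_i2 [hom_r2 [r2_i1 [r2_i2
  [hom_nabla [nabla_i1 nabla_i2]]]]]]]]] ab_G g; split.
- exact: (T1_kernel_sub_commutator_subgroup free_P hom_r1 hom_r2 hom_nabla
    r1_i1 r1_i2 r2_i1 r2_i2 nabla_i1 nabla_i2 ab_G).
- exact: (commutator_subgroup_sub_T1_kernel hom_r1 hom_r2 hom_nabla
    r1_i1 r1_i2 r2_i1 r2_i2 nabla_i1 nabla_i2).
Qed.

Theorem proposition2p2 :
  (forall (G P : groupType) (i1 i2 : G -> P) (r1 r2 nabla : P -> G),
     GG_data i1 i2 r1 r2 nabla ->
     forall (A : groupType) (ab : G -> A), is_abelianization ab ->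
     forall (T : groupType) (t1 : G -> T), is_T1Id r1 r2 nabla t1 ->
     exists Gamma : A -> T, Gamma1_spec ab t1 Gamma /\ bijective Gamma)
  /\
  (forall (G P : groupType) (i1 i2 : G -> P) (r1 r2 nabla : P -> G),
     GG_data i1 i2 r1 r2 nabla ->
   forall (H P' : groupType) (j1 j2 : H -> P') (s1 s2 nabla' : P' -> H),
     GG_data j1 j2 s1 s2 nabla' ->
   forall (AG : groupType) (abG : G -> AG), is_abelianization abG ->
   forall (AH : groupType) (abH : H -> AH), is_abelianization abH ->
   forall (TG : groupType) (tG : G -> TG), is_T1Id r1 r2 nabla tG ->
   forall (TH : groupType) (tH : H -> TH), is_T1Id s1 s2 nabla' tH ->
   forall (f : G -> H), is_hom f ->
   forall (fab : AG -> AH), (forall g, fab (abG g) = abH (f g)) ->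
   forall (fT : TG -> TH), (forall g, fT (tG g) = tH (f g)) ->
   forall (GammaG : AG -> TG) (GammaH : AH -> TH),
     Gamma1_spec abG tG GammaG -> Gamma1_spec abH tH GammaH ->
     forall a : AG, GammaH (fab a) = fT (GammaG a)).
Proof.
split.
- move=> G P i1 i2 r1 r2 nabla GG A ab ab_G T t1 t1_G.
  have same_ker := T1_kernel_commutator_subgroup GG ab_G.
  have [hom_ab [surj_ab ker_ab]] := ab_G; have [hom_t1 [surj_t1 ker_t1]] := t1_G.
  apply: iso_of_same_kernel => // x.
  by split=> [/ker_ab/same_ker/ker_t1 | /ker_t1/same_ker/ker_ab].
- move=> G P i1 i2 r1 r2 nabla _ H P' j1 j2 s1 s2 nabla' _ AG abG abG_G AH abH _
    TG tG _ TH tH _ f _ fab fabE fT fTE GammaG GammaH [_ GammaGE] [_ GammaHE] a.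
  have [_ [surj_abG _]] := abG_G; have [g <-] := surj_abG a.
  by rewrite fabE GammaHE GammaGE fTE.
Qed.
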